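(* Let $\tau_i\in\tau_H$ be a HI-task in the multi-rate fluid model with earliest completion window $k_i$, and suppose $$\sum_{j:1\le j<k_i}\theta_{i,j}^H w_j\ \ge\ u_i^H\sum_{j:1\le j<k_i}w_j \qquad\text{and}\qquad \forall j:\ 1\le j<k_i,\ \ \theta_{i,j}^H\le\theta_{i,j+1}^H .$$ Then for every time instant $t$ (measured from the mode switch) with $0\le t\le \sum_{j:1\le j<k_i}w_j$, the total execution assigned to $\tau_i$ in the interval $[t,\sum_{j:1\le j<k_i}w_j]$ (i.e., the integral over this interval of $\tau_i$'s piecewise-constant transition rate, which equals $\theta_{i,j}^H$ on window $j$) is at least $\big(\sum_{j:1\le j<k_i}w_j-t\big)\,u_i^H$.
   Context: Dual-criticality implicit-deadline sporadic tasks: task $\tau_i$ has period/relative deadline $T_i>0$, WCETs $C_i^L\le C_i^H$, $u_i^H=C_i^H/T_i\le1$; $n_H$ is the number of HI-tasks. Multi-rate fluid model: in LO-mode each job of $\tau_i$ executes at rate $\theta_i^L\in(0,1]$; after the mode switch (time $0$), the transition period $[0,\sum_{j=1}^{n_H}w_j)$ is divided into consecutive windows of durations $w_1,\dots,w_{n_H}\ge0$, window $j$ being $[\sum_{l<j}w_l,\sum_{l\le j}w_l)$, in which HI-task $\tau_i$ executes at rate $\theta_{i,j}^H\in[0,1]$; afterwards it executes at rate $\theta_i^H$. By convention $\theta_{i,n_H+1}^H$ denotes $\theta_i^H$. The earliest completion window of $\tau_i$ is the largest index $k_i\in\{1,\dots,n_H+1\}$ with $\sum_{j:1\le j<k_i}w_j<T_i-C_i^L/\theta_i^L$.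 *)

From Stdlib Require Import Reals Lra Lia List.
Open Scope R_scope.

(* psum w k = sum_{j : 1 <= j < k} w j  (windows are indexed from 1). *)
Fixpoint psum (w : nat -> R) (k : nat) : R :=
  match k with
  | O => 0
  | S k' => psum w k' + (if Nat.eqb k' 0 then 0 else w k')
  end.

Definition overlap (a b c d : R) : R := Rmax 0 (Rmin b d - Rmax a c).

(* Rate of a HI-task at time s >= 0 after the mode switch:
   th j on window j = [psum w j, psum w (j+1)) for 1 <= j <= nH,
   th (nH+1) (= theta_i^H) afterwards. *)

(* Execution assigned in [a,b] (0 <= a <= b): the integral over [a,b] of the
   piecewise-constant rate above, written as the sum over its constant pieces
   of (rate) * (length of the piece inside [a,b]). *)
Definition exec (nH : nat) (w th : nat -> R) (a b : R) : R :=
  fold_right Rplus 0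
    (map (fun j => th j * overlap a b (psum w j) (psum w (S j))) (seq 1 nH))
  + th (S nH) * Rmax 0 (b - Rmax a (psum w (S nH))).

Definition earliest_completion_window (nH : nat) (w : nat -> R)
    (T CL thL : R) (k : nat) : Prop :=
  (1 <= k <= S nH)%nat /\ psum w k < T - CL / thL /\
  (forall k', (k < k' <= S nH)%nat -> ~ (psum w k' < T - CL / thL)).

From Stdlib Require Import Reals Lra Lia List Compare_dec.
Open Scope R_scope.

(* The transition rate of the task is nondecreasing on [0, P], P = psum w k, so
   its average over a final segment [t, P] is at least its average over [0, P],
   which is at least u = CH / T.  Concretely, let c be the rate of the window
   containing t: the execution in [t, P] is at least c (P - t), the execution in
   [0, t] is at most c t, and their sum is at least u P.  If u <= c the first
   bound suffices; otherwise subtracting the second from the total does. *)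

Lemma psum_S (f : nat -> R) (j : nat) :
  (1 <= j)%nat -> psum f (S j) = psum f j + f j.
Proof. intros Hj; simpl; destruct (Nat.eqb_spec j 0); [lia | reflexivity]. Qed.

Lemma psum_ext (f g : nat -> R) (k : nat) :
  (forall j, (1 <= j < k)%nat -> f j = g j) -> psum f k = psum g k.
Proof.
  induction k as [|k IH]; intros Hfg; [reflexivity|].
  destruct (Nat.eq_dec k 0) as [-> | Hk]; [reflexivity|].
  rewrite !psum_S by lia.
  rewrite IH, Hfg; [reflexivity | lia | intros; apply Hfg; lia].
Qed.

Lemma psum_le (f g : nat -> R) (k : nat) :
  (forall j, (1 <= j < k)%nat -> f j <= g j) -> psum f k <= psum g k.
Proof.
  induction k as [|k IH]; intros Hfg; [simpl; lra|].
  destruct (Nat.eq_dec k 0) as [-> | Hk]; [simpl; lra|].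
  rewrite !psum_S by lia.
  assert (f k <= g k) by (apply Hfg; lia).
  assert (psum f k <= psum g k) by (apply IH; intros; apply Hfg; lia).
  lra.
Qed.

Lemma psum_plus (f g : nat -> R) (k : nat) :
  psum (fun j => f j + g j) k = psum f k + psum g k.
Proof.
  induction k as [|k IH]; simpl; [lra|].
  rewrite IH; destruct (Nat.eqb k 0); lra.
Qed.

Lemma psum_scal (c : R) (f : nat -> R) (k : nat) :
  psum (fun j => c * f j) k = c * psum f k.
Proof.
  induction k as [|k IH]; simpl; [lra|].
  rewrite IH; destruct (Nat.eqb k 0); lra.
Qed.

Lemma psum_le_mono (f : nat -> R) (i k : nat) :
  (forall j, (1 <= j < k)%nat -> 0 <= f j) -> (i <= k)%nat -> psum f i <= psum f k.
Proof.
  induction k as [|k IH]; intros Hf Hik.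
  - replace i with 0%nat by lia; lra.
  - destruct (Nat.eq_dec i (S k)) as [-> | Hi]; [lra|].
    assert (psum f i <= psum f k) by (apply IH; [intros; apply Hf|]; lia).
    simpl; destruct (Nat.eqb_spec k 0); [lra|].
    assert (0 <= f k) by (apply Hf; lia); lra.
Qed.

Lemma psum_zero_tail (f : nat -> R) (k n : nat) :
  (k <= n)%nat -> (forall j, (k <= j < n)%nat -> f j = 0) -> psum f n = psum f k.
Proof.
  induction n as [|n IH]; intros Hkn Hf.
  - replace k with 0%nat by lia; reflexivity.
  - destruct (Nat.eq_dec k (S n)) as [-> | Hk]; [reflexivity|].
    simpl; rewrite IH, Hf; [destruct (Nat.eqb n 0); lra | lia | lia | intros; apply Hf; lia].
Qed.

Lemma fold_right_Rplus_init (x : R) (l : list R) :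
  fold_right Rplus x l = fold_right Rplus 0 l + x.
Proof. induction l as [|y l IH]; simpl; [|rewrite IH]; lra. Qed.

Lemma fold_right_Rplus_seq (f : nat -> R) (n : nat) :
  fold_right Rplus 0 (map f (seq 1 n)) = psum f (S n).
Proof.
  induction n as [|n IH]; [simpl; lra|].
  rewrite seq_S, map_app, fold_right_app, fold_right_Rplus_init, IH.
  rewrite (psum_S f (S n)) by lia; simpl; lra.
Qed.

Ltac overlap_cases :=
  unfold overlap, Rmax, Rmin; repeat destruct Rle_dec; lra.

Lemma overlap_ge0 (a b c d : R) : 0 <= overlap a b c d.
Proof. apply Rmax_l. Qed.

Lemma overlap_split (a b e c d : R) :
  a <= b <= e -> overlap a b c d + overlap b e c d = overlap a e c d.
Proof. intros; overlap_cases. Qed.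

Lemma overlap_concat (a b c d e : R) :
  a <= b -> c <= d <= e -> overlap a b c d + overlap a b d e = overlap a b c e.
Proof. intros; overlap_cases. Qed.

Lemma overlap_left_of (a b c d : R) : b <= c -> overlap a b c d = 0.
Proof. intros; overlap_cases. Qed.

Lemma overlap_right_of (a b c d : R) : d <= a -> overlap a b c d = 0.
Proof. intros; overlap_cases. Qed.

Lemma overlap_inside (a b c d : R) : a <= c <= d -> d <= b -> overlap a b c d = d - c.
Proof. intros; overlap_cases. Qed.

Lemma overlap_contains (a b c d : R) : c <= a <= b -> b <= d -> overlap a b c d = b - a.
Proof. intros; overlap_cases. Qed.

Definition window_overlap (w : nat -> R) (a b : R) (j : nat) : R :=
  overlap a b (psum w j) (psum w (S j)).

Section Windows.

Variables (w : nat -> R) (n : nat).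
Hypothesis w_ge0 : forall j, (1 <= j < n)%nat -> 0 <= w j.

Lemma psum_w_mono (i k : nat) : (i <= k <= n)%nat -> psum w i <= psum w k.
Proof. intros; apply psum_le_mono; [intros; apply w_ge0|]; lia. Qed.

Lemma psum_window_overlap_telescope (a b : R) (k : nat) :
  0 <= a <= b -> (k <= n)%nat ->
  psum (window_overlap w a b) k = overlap a b 0 (psum w k).
Proof.
  intros Hab; induction k as [|k IH]; intros Hk.
  - simpl; rewrite overlap_right_of; lra.
  - destruct (Nat.eq_dec k 0) as [-> | Hk0].
    + simpl; rewrite Rplus_0_r, overlap_right_of; lra.
    + rewrite !psum_S by lia; rewrite IH by lia.
      assert (0 <= psum w k) by (apply (psum_w_mono 0); lia).
      assert (0 <= w k) by (apply w_ge0; lia).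
      unfold window_overlap; rewrite psum_S by lia.
      apply overlap_concat; lra.
Qed.

Lemma psum_window_overlap (a b : R) (k : nat) :
  0 <= a <= b -> b <= psum w k -> (k <= n)%nat ->
  psum (window_overlap w a b) k = b - a.
Proof.
  intros Hab Hb Hk; rewrite psum_window_overlap_telescope by assumption.
  apply overlap_contains; lra.
Qed.

Lemma window_overlap_full (j k : nat) :
  (1 <= j)%nat -> (S j <= k <= n)%nat -> window_overlap w 0 (psum w k) j = w j.
Proof.
  intros Hj Hjk; unfold window_overlap.
  assert (0 <= psum w j) by (apply (psum_w_mono 0); lia).
  assert (psum w (S j) <= psum w k) by (apply psum_w_mono; lia).
  assert (Hj' : psum w (S j) = psum w j + w j) by (apply psum_S; assumption).
  assert (0 <= w j) by (apply w_ge0; lia).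
  rewrite overlap_inside; lra.
Qed.

Lemma window_overlap_after (a : R) (j k : nat) :
  (k <= j < n)%nat -> window_overlap w a (psum w k) j = 0.
Proof. intros; apply overlap_left_of, psum_w_mono; lia. Qed.

End Windows.

Lemma exec_window_sum (nH : nat) (w th : nat -> R) (k : nat) (t : R) :
  (forall j, (1 <= j < S nH)%nat -> 0 <= w j) -> (k <= S nH)%nat ->
  exec nH w th t (psum w k) = psum (fun j => th j * window_overlap w t (psum w k) j) k.
Proof.
  intros Hw Hk; unfold exec; rewrite fold_right_Rplus_seq.
  assert (psum w k <= psum w (S nH)) by (apply (psum_w_mono w (S nH)); auto).
  replace (Rmax 0 (psum w k - Rmax t (psum w (S nH)))) with 0
    by (unfold Rmax; repeat destruct Rle_dec; lra).
  rewrite Rmult_0_r, Rplus_0_r.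
  apply psum_zero_tail; [assumption|].
  intros j Hj; rewrite (window_overlap_after w (S nH)); auto; lra.
Qed.

Lemma last_window_start_le (w : nat -> R) (t : R) (k : nat) :
  (1 <= k)%nat -> 0 <= t ->
  exists m, (1 <= m <= k)%nat /\ psum w m <= t /\
            (forall j, (m < j <= k)%nat -> t < psum w j).
Proof.
  intros Hk Ht; induction k as [|k IH]; [lia|].
  destruct (Nat.eq_dec k 0) as [-> | Hk0].
  - exists 1%nat; split; [lia|]; split; [simpl; lra | intros; lia].
  - destruct (Rle_lt_dec (psum w (S k)) t) as [Hle | Hlt].
    + exists (S k); split; [lia|]; split; [assumption | intros; lia].
    + destruct IH as (m & Hm & Hmt & Hafter); [lia|].
      exists m; split; [lia|]; split; [assumption|].
      intros j Hj; destruct (Nat.eq_dec j (S k)) as [-> | Hj']; auto.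
      apply Hafter; lia.
Qed.

Lemma nondecreasing_le (f : nat -> R) (k i j : nat) :
  (forall l, (1 <= l < k)%nat -> f l <= f (S l)) ->
  (1 <= i <= j)%nat -> (j <= k)%nat -> f i <= f j.
Proof.
  intros Hf Hij Hjk; induction j as [|j IH]; [lia|].
  destruct (Nat.eq_dec i (S j)) as [-> | Hi]; [lra|].
  assert (f j <= f (S j)) by (apply Hf; lia).
  assert (f i <= f j) by (apply IH; lia).
  lra.
Qed.

(* Windows before the pivot window m lie in [0, t], those after it in [t, b]. *)
Lemma window_pivot_bounds (w th : nat -> R) (n k m : nat) (t b : R) :
  (forall j, (1 <= j < n)%nat -> 0 <= w j) -> (k <= n)%nat ->
  (forall j, (1 <= j < k)%nat -> th j <= th (S j)) ->
  (1 <= m <= k)%nat -> psum w m <= t -> (forall j, (m < j <= k)%nat -> t < psum w j) ->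
  forall j, (1 <= j < k)%nat ->
    th j * window_overlap w 0 t j <= th m * window_overlap w 0 t j /\
    th m * window_overlap w t b j <= th j * window_overlap w t b j.
Proof.
  intros Hw Hkn Hth Hm Hmt Hafter j Hj.
  assert (H0t := overlap_ge0 0 t (psum w j) (psum w (S j))).
  assert (Htb := overlap_ge0 t b (psum w j) (psum w (S j))).
  unfold window_overlap in *.
  destruct (lt_eq_lt_dec j m) as [[Hjm | <-] | Hmj].
  - assert (th j <= th m) by (apply (nondecreasing_le th k); auto; lia).
    assert (psum w (S j) <= psum w m) by (apply (psum_w_mono w n); auto; lia).
    rewrite (overlap_right_of t) by lra.
    split; [apply Rmult_le_compat_r|]; lra.
  - split; lra.
  - assert (th m <= th j) by (apply (nondecreasing_le th k); auto; lia).
    assert (t < psum w j) by (apply Hafter; lia).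
    rewrite (overlap_left_of 0 t) by lra.
    split; [|apply Rmult_le_compat_r]; lra.
Qed.

Lemma psum_tail_average (f r l : nat -> R) (c u : R) (k : nat) :
  (forall j, (1 <= j < k)%nat -> f j * r j <= c * r j /\ c * l j <= f j * l j) ->
  0 <= psum r k -> 0 <= psum l k ->
  u * (psum r k + psum l k) <= psum (fun j => f j * (r j + l j)) k ->
  u * psum l k <= psum (fun j => f j * l j) k.
Proof.
  intros Hpivot Hr Hl Htotal.
  assert (Hhead : psum (fun j => f j * r j) k <= c * psum r k)
    by (rewrite <- psum_scal; apply psum_le; apply Hpivot).
  assert (Htail : c * psum l k <= psum (fun j => f j * l j) k)
    by (rewrite <- psum_scal; apply psum_le; apply Hpivot).
  rewrite (psum_ext (fun j => f j * (r j + l j)) (fun j => f j * r j + f j * l j)),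
    psum_plus in Htotal
    by (intros; ring).
  destruct (Rle_lt_dec u c); nra.
Qed.

Theorem lemma1 (nH : nat) (T CL CH thL thH : R) (w th : nat -> R) (k : nat) (t : R) :
  (1 <= nH)%nat ->
  0 < T -> 0 <= CL -> CL <= CH -> CH / T <= 1 ->
  0 < thL <= 1 ->
  (forall j, (1 <= j <= nH)%nat -> 0 <= w j) ->
  (forall j, (1 <= j <= nH)%nat -> 0 <= th j <= 1) ->
  th (S nH) = thH -> 0 <= thH <= 1 ->
  earliest_completion_window nH w T CL thL k ->
  psum (fun j => th j * w j) k >= (CH / T) * psum w k ->
  (forall j, (1 <= j < k)%nat -> th j <= th (S j)) ->
  0 <= t <= psum w k ->
  exec nH w th t (psum w k) >= (psum w k - t) * (CH / T).
Proof.
  intros _ _ _ _ _ _ Hw _ _ _ [Hk _] Havg Hmono Ht.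
  assert (Hw' : forall j, (1 <= j < S nH)%nat -> 0 <= w j) by (intros; apply Hw; lia).
  rewrite exec_window_sum by (assumption || lia).
  set (P := psum w k) in *.
  destruct (last_window_start_le w t k) as (m & Hm & Hmt & Hafter); [lia | lra |].
  assert (Hhead := psum_window_overlap w (S nH) Hw' 0 t k).
  assert (Htail := psum_window_overlap w (S nH) Hw' t P k).
  assert (Htotal : psum (fun j => th j * (window_overlap w 0 t j + window_overlap w t P j)) k
                   = psum (fun j => th j * w j) k).
  { apply psum_ext; intros j Hj.
    rewrite <- (window_overlap_full w (S nH) Hw' j k) by lia.
    unfold window_overlap; rewrite overlap_split by lra; reflexivity. }
  assert (Hpivot := window_pivot_bounds w th (S nH) k m t P Hw' ltac:(lia)
                      Hmono Hm Hmt Hafter).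
  assert (Hbound := psum_tail_average th _ _ (th m) (CH / T) k Hpivot).
  rewrite Htotal, Hhead, Htail in Hbound by (unfold P in *; lra || lia).
  lra.
Qed.
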